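(* Consider two $2\times 2$ matrices $G, A$ of real numbers, where $A$ is symmetric and positive definite, i.e. \[ G=\begin{pmatrix}a&b\\ c&d\end{pmatrix},\qquad A=\begin{pmatrix}\alpha&\beta\\ \beta&\gamma\end{pmatrix} \quad(\alpha>0,\ \delta:=\det(A)=\alpha\gamma-\beta^{2}>0). \] Then there exists a symmetric matrix $S=\begin{pmatrix}s_{11}& s_{12}\\ s_{12}& s_{22}\end{pmatrix}$ solving \[ SG+G^TS=2SAS\quad \text{and}\quad \mathrm{trace}(G-AS)=0, \] and which is of the following form: \begin{itemize} \item[(i)] If $\mathrm{trace}(G)=a+d=0$, we can choose $S=0$. \item[(ii)] If $\mathrm{trace}(G)=a+d \neq 0$ and $G$ is singular, i.e. $\det(G)=ad-bc=0$, we can choose \begin{eqnarray*} S&=&\frac{a+d}{\alpha a^2+2\beta ab + \gamma b^2}\begin{pmatrix}a^2& ab\\ ab& b^2\end{pmatrix}, \qquad \text{if }\ b\not =0,\\[3pt] S&=&\frac{a+d}{\alpha c^2+2\beta cd + \gamma d^2}\begin{pmatrix}c^2& cd\\ cd& d^2\end{pmatrix}, \qquad \text{if }\ b=0,\ c\not=0, \end{eqnarray*} and in case $b=c=0$, we may choose \begin{eqnarray*} S\ =\ \begin{pmatrix}\frac{a}{\alpha}& 0\\ 0& 0\end{pmatrix}, \qquad \text{if }\ a\not =0,\qquad S\ =\ \begin{pmatrix}0& 0\\ 0& \frac{d}{\gamma}\end{pmatrix}, \qquad \text{if }\ d\not=0. \end{eqnarray*} \item[(iii)] If $\mathrm{trace}(G)=a+d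 \neq 0$ and $G$ is non-singular, i.e. $\det(G)=ad-bc\not=0$, we can choose \begin{eqnarray*} S\ =\ \kappa\begin{pmatrix}\gamma a(a+d) + \alpha c^2 - \gamma bc - 2\beta ac& \alpha cd + \gamma ab - 2\beta ad\\ \alpha cd + \gamma ab - 2\beta ad& \alpha d(a+d) + \gamma b^2 - \alpha bc - 2\beta bd\end{pmatrix}, \end{eqnarray*} where \[ \kappa=\frac{a+d}{ (\alpha \gamma-\beta^2) (a+d)^2 +\big( \gamma b - \alpha c + \beta(a-d)\big)^2}. \] \end{itemize}
   Context: Dimension $d=2$. All matrices have real entries. *)

From HB Require Import structures.
From mathcomp Require Import all_boot all_order all_algebra.
Set Implicit Arguments. Unset Strict Implicit. Unset Printing Implicit Defensive.
Import Order.TTheory GRing.Theory Num.Theory.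
Local Open Scope ring_scope.

Definition mx2 (R : nzRingType) (p q r s : R) : 'M[R]_2 :=
  \matrix_(i < 2, j < 2)
    if (i == 0 :> nat) then (if (j == 0 :> nat) then p else q)
    else (if (j == 0 :> nat) then r else s).

Definition is_solution (R : nzRingType) (G A S : 'M[R]_2) : Prop :=
  S^T = S /\
  S *m G + G^T *m S = 2%:R *: (S *m A *m S) /\
  \tr (G - A *m S) = 0.

From HB Require Import structures.
From mathcomp Require Import all_boot all_order all_algebra.
From mathcomp Require Import ring.
Set Implicit Arguments.
Unset Strict Implicit.
Unset Printing Implicit Defensive.

Import Order.TTheory GRing.Theory Num.Theory.
Local Open Scope ring_scope.

(* A singular G factors as u v^T, and the ansatz S = t v v^T reduces both
   equations to the single scalar condition t (v^T A v) = tr G, solvable since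
   A is positive definite.  For trace G <> 0 the closed form of case (iii) is
   a rational identity whose denominator
   det A (tr G)^2 + (gamma b - alpha c + beta (a - d))^2 is positive; it needs
   no assumption on det G. *)

Section Mx2Algebra.
Variable R : nzRingType.
Implicit Types k p q r s u v w x : R.

Lemma mul_mx2 p q r s u v w x : mx2 p q r s *m mx2 u v w x =
  mx2 (p * u + q * w) (p * v + q * x) (r * u + s * w) (r * v + s * x).
Proof.
apply/matrixP => i j; rewrite !mxE !big_ord_recl big_ord0 !mxE.
by case: i => [[|[|//]] ?]; case: j => [[|[|//]] ?] /=; rewrite addr0.
Qed.

Lemma trmx_mx2 p q r s : (mx2 p q r s)^T = mx2 p r q s.
Proof.
apply/matrixP => i j; rewrite !mxE.
by case: i => [[|[|//]] ?]; case: j => [[|[|//]] ?].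
Qed.

Lemma add_mx2 p q r s u v w x :
  mx2 p q r s + mx2 u v w x = mx2 (p + u) (q + v) (r + w) (s + x).
Proof.
apply/matrixP => i j; rewrite !mxE.
by case: i => [[|[|//]] ?]; case: j => [[|[|//]] ?].
Qed.

Lemma scale_mx2 k p q r s :
  k *: mx2 p q r s = mx2 (k * p) (k * q) (k * r) (k * s).
Proof.
apply/matrixP => i j; rewrite !mxE.
by case: i => [[|[|//]] ?]; case: j => [[|[|//]] ?].
Qed.

Lemma opp_mx2 p q r s : - mx2 p q r s = mx2 (- p) (- q) (- r) (- s).
Proof. by rewrite -scaleN1r scale_mx2 !mulN1r. Qed.

Lemma mxtrace_mx2 p q r s : \tr (mx2 p q r s) = p + s.
Proof. by rewrite /mxtrace !big_ord_recl big_ord0 !mxE /= addr0. Qed.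

Lemma is_solution_0 (G A : 'M[R]_2) : \tr G = 0 -> is_solution G A 0.
Proof.
by move=> trG0; rewrite /is_solution trmx0 !(mul0mx, mulmx0) addr0 scaler0 subr0.
Qed.

End Mx2Algebra.

Definition quad_form {R : nzRingType} (alpha beta gamma x y : R) : R :=
  alpha * x ^+ 2 + 2%:R * beta * x * y + gamma * y ^+ 2.

(* Three entries suffice: for symmetric S and A, over a commutative ring, both
   sides of S G + G^T S = 2 S A S are symmetric. *)
Lemma mx2_is_solution (R : comNzRingType) (alpha beta gamma a b c d p q s : R) :
  (p * a + q * c) + (a * p + c * q)
    = 2%:R * ((p * alpha + q * beta) * p + (p * beta + q * gamma) * q) ->
  (p * b + q * d) + (a * q + c * s)
    = 2%:R * ((p * alpha + q * beta) * q + (p * beta + q * gamma) * s) ->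
  (q * b + s * d) + (b * q + d * s)
    = 2%:R * ((q * alpha + s * beta) * q + (q * beta + s * gamma) * s) ->
  a + d = alpha * p + 2%:R * beta * q + gamma * s ->
  is_solution (mx2 a b c d) (mx2 alpha beta beta gamma) (mx2 p q q s).
Proof.
move=> e11 e12 e22 etr; rewrite /is_solution !trmx_mx2 !mul_mx2 add_mx2.
rewrite scale_mx2 opp_mx2 add_mx2 mxtrace_mx2; split=> //; split.
  by congr mx2 => //; apply: etrans (etrans _ e12) _; ring.
apply: etrans (_ : _ = a + d - (alpha * p + 2%:R * beta * q + gamma * s)) _.
  by ring.
by rewrite etr subrr.
Qed.

Section SymmetricSolutions.
Variables (R : fieldType) (alpha beta gamma : R).
Local Notation A := (mx2 alpha beta beta gamma).
Local Notation Q := (quad_form alpha beta gamma).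

(* For G = u v^T and S = t v v^T with v = (x, y), both sides of the equation
   are multiples of v v^T, namely 2 t (u . v) and 2 t^2 Q(v), while
   tr (A S) = t Q(v); so t = (u . v) / Q(v) = tr G / Q(v) works. *)
Lemma rank_one_is_solution u1 u2 x y : Q x y != 0 ->
  is_solution (mx2 (u1 * x) (u1 * y) (u2 * x) (u2 * y)) A
    ((u1 * x + u2 * y) / Q x y *: mx2 (x ^+ 2) (x * y) (x * y) (y ^+ 2)).
Proof.
rewrite /quad_form => Q_neq0; rewrite scale_mx2.
by apply: mx2_is_solution; field.
Qed.

Lemma general_is_solution (a b c d : R) :
  let D := (alpha * gamma - beta ^+ 2) * (a + d) ^+ 2
           + (gamma * b - alpha * c + beta * (a - d)) ^+ 2 in
  D != 0 ->
  is_solution (mx2 a b c d) A ((a + d) / D *: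
    mx2 (gamma * a * (a + d) + alpha * c ^+ 2 - gamma * b * c - 2%:R * beta * a * c)
        (alpha * c * d + gamma * a * b - 2%:R * beta * a * d)
        (alpha * c * d + gamma * a * b - 2%:R * beta * a * d)
        (alpha * d * (a + d) + gamma * b ^+ 2 - alpha * b * c - 2%:R * beta * b * d)).
Proof. by rewrite /= => D_neq0; rewrite scale_mx2; apply: mx2_is_solution; field. Qed.

Lemma diag_l_is_solution a : alpha != 0 ->
  is_solution (mx2 a 0 0 0) A (mx2 (a / alpha) 0 0 0).
Proof. by move=> alpha_neq0; apply: mx2_is_solution; field. Qed.

Lemma diag_r_is_solution d : gamma != 0 ->
  is_solution (mx2 0 0 0 d) A (mx2 0 0 0 (d / gamma)).
Proof. by move=> gamma_neq0; apply: mx2_is_solution; field. Qed.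

End SymmetricSolutions.

Section PositiveDefinite.
Variables (R : realFieldType) (alpha beta gamma : R).
Hypotheses (alpha_gt0 : 0 < alpha) (delta_gt0 : 0 < alpha * gamma - beta ^+ 2).
Local Notation A := (mx2 alpha beta beta gamma).
Local Notation Q := (quad_form alpha beta gamma).

Lemma gamma_gt0 : 0 < gamma.
Proof.
have alpha_gamma_gt0 : 0 < alpha * gamma.
  by apply: lt_le_trans (delta_gt0) _; rewrite gerBl sqr_ge0.
by rewrite -(pmulr_rgt0 _ alpha_gt0).
Qed.

Lemma quad_form_gt0 (x y : R) : (x != 0) || (y != 0) -> 0 < Q x y.
Proof.
move=> xy_neq0; rewrite -(pmulr_rgt0 _ alpha_gt0).
have -> : alpha * Q x y
    = (alpha * x + beta * y) ^+ 2 + (alpha * gamma - beta ^+ 2) * y ^+ 2.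
  by rewrite /quad_form; ring.
have [y0 | y_neq0] := eqVneq y 0.
  move: xy_neq0; rewrite y0 eqxx orbF => x_neq0.
  by rewrite expr0n /= !mulr0 !addr0 exprn_even_gt0 // mulf_neq0 // gt_eqF.
by rewrite ltr_wpDl ?sqr_ge0 // mulr_gt0 // exprn_even_gt0.
Qed.

Lemma singular_row1_is_solution (a b c d : R) : a * d - b * c = 0 -> b != 0 ->
  is_solution (mx2 a b c d) A
    ((a + d) / Q a b *: mx2 (a ^+ 2) (a * b) (a * b) (b ^+ 2)).
Proof.
move=> det0 b_neq0.
have c_eq : c = d / b * a.
  have bc_ad : b * c = a * d by apply/eqP; rewrite eq_sym -subr_eq0 det0.
  by rewrite -[c](mulKf b_neq0) bc_ad; ring.
have -> : mx2 a b c d = mx2 (1 * a) (1 * b) (d / b * a) (d / b * b).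
  by rewrite c_eq !mul1r divfK.
have -> : a + d = 1 * a + d / b * b by rewrite mul1r divfK.
by apply: rank_one_is_solution; rewrite gt_eqF // quad_form_gt0 // b_neq0 orbT.
Qed.

Lemma singular_row2_is_solution (a b c d : R) :
  a * d - b * c = 0 -> b = 0 -> c != 0 ->
  is_solution (mx2 a b c d) A
    ((a + d) / Q c d *: mx2 (c ^+ 2) (c * d) (c * d) (d ^+ 2)).
Proof.
move=> det0 b0 c_neq0; subst b; move: det0; rewrite mul0r subr0 => ad0.
have -> : mx2 a 0 c d = mx2 (a / c * c) (a / c * d) (1 * c) (1 * d).
  by rewrite [a / c * d]mulrAC ad0 mul0r divfK // !mul1r.
have -> : a + d = a / c * c + 1 * d by rewrite divfK // mul1r.
by apply: rank_one_is_solution; rewrite gt_eqF // quad_form_gt0 // c_neq0.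
Qed.

Lemma singular_diag_l_is_solution (a b c d : R) :
  a * d - b * c = 0 -> b = 0 -> c = 0 -> a != 0 ->
  is_solution (mx2 a b c d) A (mx2 (a / alpha) 0 0 0).
Proof.
move=> det0 b0 c0 a_neq0; subst b c; move/eqP: det0; rewrite mul0r subr0.
rewrite mulf_eq0 (negPf a_neq0) => /eqP ->.
by apply: diag_l_is_solution; rewrite gt_eqF.
Qed.

Lemma singular_diag_r_is_solution (a b c d : R) :
  a * d - b * c = 0 -> b = 0 -> c = 0 -> d != 0 ->
  is_solution (mx2 a b c d) A (mx2 0 0 0 (d / gamma)).
Proof.
move=> det0 b0 c0 d_neq0; subst b c; move/eqP: det0; rewrite mul0r subr0.
rewrite mulf_eq0 (negPf d_neq0) orbF => /eqP ->.
by apply: diag_r_is_solution; rewrite gt_eqF ?gamma_gt0.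
Qed.

Lemma trace_neq0_is_solution (a b c d : R) : a + d != 0 ->
  is_solution (mx2 a b c d) A
    ((a + d) / ((alpha * gamma - beta ^+ 2) * (a + d) ^+ 2
                + (gamma * b - alpha * c + beta * (a - d)) ^+ 2) *:
    mx2 (gamma * a * (a + d) + alpha * c ^+ 2 - gamma * b * c - 2%:R * beta * a * c)
        (alpha * c * d + gamma * a * b - 2%:R * beta * a * d)
        (alpha * c * d + gamma * a * b - 2%:R * beta * a * d)
        (alpha * d * (a + d) + gamma * b ^+ 2 - alpha * b * c - 2%:R * beta * b * d)).
Proof.
move=> trN0; apply: general_is_solution.
by rewrite gt_eqF // ltr_wpDr ?sqr_ge0 // mulr_gt0 // exprn_even_gt0.
Qed.

End PositiveDefinite.

Theorem theorem2p13 (R : realFieldType) (a b c d alpha beta gamma : R) :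
  0 < alpha -> 0 < alpha * gamma - beta ^+ 2 ->
  let G := mx2 a b c d in
  let A := mx2 alpha beta beta gamma in
  (exists S : 'M[R]_2, is_solution G A S) /\
  (* (i) *)
  (a + d = 0 -> is_solution G A 0) /\
  (* (ii) *)
  (a + d != 0 -> a * d - b * c = 0 -> b != 0 ->
     is_solution G A ((a + d) / (alpha * a ^+ 2 + 2%:R * beta * a * b + gamma * b ^+ 2)
                        *: mx2 (a ^+ 2) (a * b) (a * b) (b ^+ 2))) /\
  (a + d != 0 -> a * d - b * c = 0 -> b = 0 -> c != 0 ->
     is_solution G A ((a + d) / (alpha * c ^+ 2 + 2%:R * beta * c * d + gamma * d ^+ 2)
                        *: mx2 (c ^+ 2) (c * d) (c * d) (d ^+ 2))) /\
  (a + d != 0 -> a * d - b * c = 0 -> b = 0 -> c = 0 -> a != 0 ->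
     is_solution G A (mx2 (a / alpha) 0 0 0)) /\
  (a + d != 0 -> a * d - b * c = 0 -> b = 0 -> c = 0 -> d != 0 ->
     is_solution G A (mx2 0 0 0 (d / gamma))) /\
  (* (iii) *)
  (a + d != 0 -> a * d - b * c != 0 ->
     let kappa := (a + d) / ((alpha * gamma - beta ^+ 2) * (a + d) ^+ 2
                    + (gamma * b - alpha * c + beta * (a - d)) ^+ 2) in
     is_solution G A (kappa *:
       mx2 (gamma * a * (a + d) + alpha * c ^+ 2 - gamma * b * c - 2%:R * beta * a * c)
           (alpha * c * d + gamma * a * b - 2%:R * beta * a * d)
           (alpha * c * d + gamma * a * b - 2%:R * beta * a * d)
           (alpha * d * (a + d) + gamma * b ^+ 2 - alpha * b * c - 2%:R * beta * b * d))).
Proof.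
move=> alpha_gt0 delta_gt0 G A.
have trace0 : a + d = 0 -> is_solution G A 0.
  by move=> tr0; apply: is_solution_0; rewrite mxtrace_mx2.
split.
  have [/trace0 S0 | trN0] := eqVneq (a + d) 0; first by exists 0.
  by eexists; apply: trace_neq0_is_solution trN0.
split; first exact: trace0.
split; first by move=> _; exact: singular_row1_is_solution.
split; first by move=> _; exact: singular_row2_is_solution.
split; first by move=> _; exact: singular_diag_l_is_solution.
split; first by move=> _; exact: singular_diag_r_is_solution.
by move=> trN0 _; exact: trace_neq0_is_solution.
Qed.
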